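(* In the algorithm PELEG described in the context, after each phase $m\ge 1$, \[ \max_{x,x'\in\mathcal X_m,\,x\ne x'}\|x-x'\|^2_{(V^m_{N_m})^{-1}}\le\frac{\left((1/2)^{m+1}\right)^2}{8\log(K^2/\delta_m)}. \]
   Context: Arms are a finite set $\mathcal{X}=\{x_1,\dots,x_K\}\subset\mathbb{R}^d$ with $\|x_k\|_2\le1$; rewards of arm $x$ are $\theta^{*T}x$ plus conditionally $1$-subgaussian noise, $\theta^*\in\mathbb R^d$ unknown. $\|x\|_A=\sqrt{x^TAx}$; $C=\lambda_{\min}(\sum_{k=1}^Kx_kx_k^T)$; $\mathcal P_K$ is the probability simplex on $[K]$; $B(0,D)$ the closed Euclidean ball of radius $D$; $\log$ is natural log. Algorithm PELEG (input $\mathcal X,\delta$). Set $m=1$, $\mathcal X_1=\mathcal X$. While $|\mathcal X_m|>1$ (phase $m$): 1. $\delta_m=\delta/m^2$, $r_m=\sqrt{8\log(K^2/\delta_m)}$, $D_m=2(\sqrt2-1)\sqrt{C/(\max_{x,x'\in\mathcal X_m,x\ne x'}\|x-x'\|_2^2\log K)}$, $\epsilon_m=\min\{1, D_m\sqrt C/r_m\}\,(1/2)^{m+1}$. 2. For $x\in\mathcal X_m$, $\mathcal C_m(x)=\{\lambda\in\mathbb R^d:\exists x'\in\mathcal X_m, x'\ne x,\ \lambda^Tx'\ge\lambda^Tx+\epsilon_m\}$; let $\Lambda_m=\bigcup_{x\in\mathcal X_m}\mathcal C_m(x)\cap B(0,D_m)$. 3. Burn-in: play each arm of $\mathcal X$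 once; set $n^k_K=1$ for all $k$, $V^m_K=\sum_{k=1}^Kx_kx_k^T$, $t=K$. Initialize afresh an exponential-weights (Hedge) learner over the $K$ experts $\hat e_1,\dots,\hat e_K$. 4. While $\min_{\lambda\in\Lambda_m}\|\lambda\|^2_{V^m_t}\le r_m^2$: set $t\leftarrow t+1$; get $w_t\in\mathcal P_K$ from the Hedge learner and form $W_t=\sum_kw_t^kx_kx_k^T$; let $\lambda_t\in\mathrm{argmin}_{\lambda\in\Lambda_m}\|\lambda\|^2_{W_t}$; set $U_t^k=(\lambda_t^Tx_k)^2$ and feed the Hedge learner the loss $l_t(w)=-w^TU_t$; play arm $k_t=\mathrm{argmin}_{k} n^k_{t-1}/\sum_{s=1}^t w_s^k$, increment its count, observe the reward $Y_t$, and set $V^m_t=V^m_{t-1}+x_{k_t}x_{k_t}^T$. 5. Set $N_m=t$ (so the phase stops at the first $t\ge K$ with $\min_{\lambda\in\Lambda_m}\|\lambda\|^2_{V^m_t}> r_m^2$), compute $\hat\theta_m=(V^m_{N_m})^{-1}\sum_{s=1}^{N_m}Y_sx_{k_s}$, set $\mathcal X_{m+1}=\mathcal X_m\setminus\{x\in\mathcal X_m:\exists x'\in\mathcal X_m,\ \hat\theta_m^T(x'-x)>2^{-(m+2)}\}$, and $m\leftarrow m+1$. Return $\mathcal X_m$. *)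

From HB Require Import structures.
From mathcomp Require Import all_boot all_order all_algebra.
From mathcomp Require Import all_classical all_reals all_analysis.
Set Implicit Arguments. Unset Strict Implicit. Unset Printing Implicit Defensive.
Import Order.TTheory GRing.Theory Num.Theory.
Local Open Scope ring_scope.
Local Open Scope classical_set_scope.

Section PELEG.
Variables (R : realType) (d K : nat).

Definition qform (A : 'M[R]_d) (y : 'cV[R]_d) : R := ((y^T *m A *m y) 0 0).
Definition mxnorm (A : 'M[R]_d) (y : 'cV[R]_d) : R := Num.sqrt (qform A y).
Definition norm2 (y : 'cV[R]_d) : R := Num.sqrt (\sum_(i < d) (y i 0) ^+ 2).

Definition lambda_min (A : 'M[R]_d) : R := inf [set a : R | eigenvalue A a].

Variable x : 'I_K -> 'cV[R]_d.

Definition gram : 'M[R]_d := \sum_(k < K) (x k *m (x k)^T).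
Definition Cmin : R := lambda_min gram.

(* design matrix  sum_k n_k x_k x_k^T  for play counts n *)
Definition design (n : 'I_K -> nat) : 'M[R]_d :=
  \sum_(k < K) ((n k)%:R *: (x k *m (x k)^T)).

(* The active set X_m is represented by a set S of indices. *)
Variable S : {set 'I_K}.

Definition pairmax (f : 'cV[R]_d -> R) : R :=
  \big[Num.max/0]_(i in S) \big[Num.max/0]_(j in S | x i != x j) f (x i - x j).

Variables (delta : R) (m : nat).

Definition delta_m : R := delta / (m%:R ^+ 2).
Definition r_m : R := Num.sqrt (8 * ln ((K%:R ^+ 2) / delta_m)).
Definition D_m : R :=
  2 * (Num.sqrt 2 - 1) *
  Num.sqrt (Cmin / (pairmax (fun y => norm2 y ^+ 2) * ln K%:R)).
Definition eps_m : R := Num.min 1 (D_m * Num.sqrt Cmin / r_m) * (2^-1) ^+ m.+1.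

Definition Cset (i : 'I_K) : set 'cV[R]_d :=
  [set lam | exists2 j, j \in S &
     x j != x i /\
     ((lam^T *m x j) 0 0 >= (lam^T *m x i) 0 0 + eps_m)].
Definition Lambda_m : set 'cV[R]_d :=
  (\bigcup_(i in [set i | i \in S]) Cset i) `&` [set lam | norm2 lam <= D_m].

Definition phase_stopped (V : 'M[R]_d) : Prop :=
  ((r_m ^+ 2)%:E < ereal_inf [set (mxnorm V lam ^+ 2)%:E | lam in Lambda_m])%E.

End PELEG.

From HB Require Import structures.
From mathcomp Require Import all_boot all_order all_algebra.
From mathcomp Require Import all_classical all_reals all_analysis.
From mathcomp Require Import complex ring.
Import Order.TTheory GRing.Theory Num.Theory.
Local Open Scope ring_scope.
Local Open Scope sesquilinear_scope.
Set Implicit Arguments. Unset Strict Implicit. Unset Printing Implicit Defensive.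

(* If a pair y = x_i - x_j had q := |y|^2_{V^-1} > a^2 / r^2, with a = 2^-(m+1)
   and r = r_m, the direction lam := (eps_m / q) V^-1 y would satisfy
   lam^T y = eps_m, and since V dominates sum_k x_k x_k^T, hence C I (Rayleigh
   bound, obtained from the complex spectral theorem), also
   |lam|^2 <= eps_m^2 / (C q) <= D_m^2.  So lam lies in Lambda_m, and the
   stopping rule gives r^2 < |lam|^2_V = eps_m^2 / q <= a^2 / q < r^2.  The
   same rule applied to lam = 0 excludes C <= 0. *)

Section NormalMatrix.
Variables (C : numClosedFieldType) (n : nat) (A : 'M[C]_n).
Hypothesis A_normal : A \is normalmx.
Let P := spectralmx A.
Let D := spectral_diag A.

Lemma spectral_diag_eigenvalue j : eigenvalue A (D 0 j).
Proof.
have PA : P *m A = diag_mx D *m P.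
  by rewrite {1}(orthomx_spectralP A_normal) !mulmxA mulmxV ?spectral_unit ?mul1mx.
apply/eigenvalueP; exists (row j P).
  by rewrite -row_mul PA row_mul row_diag_mx -scalemxAl -rowE.
apply: contraTneq isT => Pj0.
have : row j (P *m invmx P) = 0 by rewrite row_mul Pj0 mul0mx.
rewrite mulmxV ?spectral_unit // => /rowP/(_ j).
by rewrite !mxE eqxx => /eqP; rewrite oner_eq0.
Qed.

Lemma normalmx_rayleigh (c : C) : (forall j, c <= D 0 j) ->
  forall v : 'rV_n, c * (v *m v^t*) 0 0 <= (v *m A *m v^t*) 0 0.
Proof.
move=> cD v; have P_unitary : P \is unitarymx := spectral_unitarymx A.
set w := v *m P^t*.
have wE : w^t* = P *m v^t* by rewrite trmx_mul map_mxM trmxCK.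
have vv : v *m v^t* = w *m w^t*.
  by rewrite wE mulmxA -(mulmxA v) -invmx_unitary // mulVmx ?spectral_unit ?mulmx1.
have vAv : v *m A *m v^t* = w *m diag_mx D *m w^t*.
  by rewrite {1}(orthomx_spectralP A_normal) invmx_unitary // wE !mulmxA.
rewrite vv vAv mul_mx_diag !mxE mulr_sumr -subr_ge0 -sumrB.
apply: sumr_ge0 => j _; rewrite !mxE; set a := \sum_(i < n) _.
have -> : a * D 0 j * a^* - c * (a * a^*) = (D 0 j - c) * (a * a^*) by ring.
by rewrite mulr_ge0 ?subr_ge0 ?mul_conjC_ge0.
Qed.

End NormalMatrix.

Lemma symmetricmx_rayleigh (R : rcfType) d (A : 'M[R]_d) (c : R) : A^T = A ->
  (forall a, eigenvalue A a -> c <= a) ->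
  forall z : 'cV_d, c * (z^T *m z) 0 0 <= (z^T *m A *m z) 0 0.
Proof.
move=> A_sym c_le z; pose f := real_complex R; pose Ac := map_mx f A.
have f_real a : f a \is Num.real by apply/complex_realP; exists a.
have Ac_herm : Ac \is hermsymmx.
  apply: realsym_hermsym; last by apply/mxOverP => i j; rewrite mxE.
  apply/is_hermitianmxP; rewrite expr0 scale1r.
  by apply/matrixP => i j; rewrite !mxE -[in LHS]A_sym mxE.
have Ac_normal := hermitian_normalmx Ac_herm.
have c_le_D j : f c <= spectral_diag Ac 0 j.
  have /mxOverP/(_ 0 j) D_real := hermitian_spectral_diag_real Ac_herm.
  rewrite -(RRe_real D_real) lecR; apply: c_le.
  by rewrite -(eigenvalue_map f) /= (RRe_real D_real) spectral_diag_eigenvalue.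
have zC : (map_mx f z^T)^t* = map_mx f z.
  by apply/matrixP => i j; rewrite !mxE conj_Creal.
have := normalmx_rayleigh Ac_normal c_le_D (map_mx f z^T).
by rewrite zC -!map_mxM ![map_mx f _ 0 0]mxE -rmorphM lecR.
Qed.

Section QuadraticForms.
Variables (R : realType) (d : nat).
Implicit Types (A : 'M[R]_d) (y z : 'cV[R]_d).

Lemma dot_cVC y z : (y^T *m z) 0 0 = (z^T *m y) 0 0.
Proof. by rewrite !mxE; apply: eq_bigr => i _; rewrite !mxE mulrC. Qed.

Lemma qform_outer y z : qform (z *m z^T) y = ((y^T *m z) 0 0) ^+ 2.
Proof.
rewrite /qform !mulmxA -mulmxA [LHS]mxE big_ord1.
by rewrite [(z^T *m y) 0 0]dot_cVC expr2.
Qed.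

Lemma qformZ A c y : qform A (c *: y) = c ^+ 2 * qform A y.
Proof.
by rewrite /qform linearZ /= [(c *: y)^T]linearZ /= -!scalemxAl scalerA -expr2 mxE.
Qed.

Lemma norm2_sqr y : norm2 y ^+ 2 = (y^T *m y) 0 0.
Proof.
rewrite /norm2 sqr_sqrtr ?sumr_ge0 // => [|i _]; last exact: sqr_ge0.
by rewrite !mxE; apply: eq_bigr => i _; rewrite !mxE expr2.
Qed.

Lemma norm2_gt0 y : y != 0 -> 0 < norm2 y.
Proof.
move=> y_neq0; rewrite sqrtr_gt0 lt_neqAle sumr_ge0 ?andbT => [|i _]; last exact: sqr_ge0.
apply: contra y_neq0 => /eqP/esym/psumr_eq0P y0; apply/eqP/matrixP => i j.
by rewrite ord1 mxE; apply/eqP; rewrite -sqrf_eq0 y0 // => k _; apply: sqr_ge0.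
Qed.

Lemma psd_eigenvalue_ge0 A a :
  (forall z, 0 <= qform A z) -> eigenvalue A a -> 0 <= a.
Proof.
move=> A_psd /eigenvalueP [v vA v_neq0].
have vT_neq0 : v^T != 0 by rewrite -trmx0 (inj_eq trmx_inj).
have := A_psd v^T; rewrite /qform trmxK vA -scalemxAl mxE -[v in v *m _]trmxK -norm2_sqr.
by rewrite pmulr_lge0 // exprn_gt0 // norm2_gt0.
Qed.

Lemma lambda_min_qform A : A^T = A -> (forall z, 0 <= qform A z) ->
  forall z, lambda_min A * norm2 z ^+ 2 <= qform A z.
Proof.
move=> A_sym A_psd z; rewrite norm2_sqr; apply: symmetricmx_rayleigh => // a Aa.
apply: ge_inf => //; exists 0 => b; exact: psd_eigenvalue_ge0.
Qed.

Lemma qform_coercive_unitmx A c : 0 < c ->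
  (forall z, c * norm2 z ^+ 2 <= qform A z) -> A \in unitmx.
Proof.
move=> c_gt0 A_coer; apply: contraT => A_sing.
have : kermx A != 0 by rewrite kermx_eq0 row_free_unit.
case/rowV0Pn => v /sub_kermxP vA v_neq0.
have vT_neq0 : v^T != 0 by rewrite -trmx0 (inj_eq trmx_inj).
have := A_coer v^T; rewrite /qform trmxK vA mul0mx mxE.
by rewrite leNgt pmulr_rgt0 ?exprn_gt0 ?norm2_gt0.
Qed.

End QuadraticForms.

Section DesignMatrix.
Variables (R : realType) (d K : nat) (x : 'I_K -> 'cV[R]_d).
Implicit Types (n : 'I_K -> nat) (l : 'cV[R]_d).

Lemma qform_design n l :
  qform (design x n) l = \sum_k (n k)%:R * ((l^T *m x k) 0 0) ^+ 2.
Proof.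
rewrite /qform /design mulmx_sumr mulmx_suml summxE; apply: eq_bigr => k _.
by rewrite -scalemxAr -scalemxAl mxE -qform_outer.
Qed.

Lemma qform_design_ge0 n l : 0 <= qform (design x n) l.
Proof. by rewrite qform_design sumr_ge0 // => k _; rewrite mulr_ge0 ?sqr_ge0. Qed.

Lemma trmx_design n : (design x n)^T = design x n.
Proof.
rewrite /design linear_sum; apply: eq_bigr => k _.
by rewrite linearZ /= trmx_mul trmxK.
Qed.

Lemma gram_design : gram x = design x (fun=> 1%N).
Proof. by apply: eq_bigr => k _; rewrite scale1r. Qed.

Lemma qform_gram_le_design n l : (forall k, (1 <= n k)%N) ->
  qform (gram x) l <= qform (design x n) l.
Proof.
move=> n_ge1; rewrite gram_design !qform_design; apply: ler_sum => k _.
by rewrite ler_wpM2r ?sqr_ge0 // ler_nat.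
Qed.

Lemma design_coercive n : (forall k, (1 <= n k)%N) ->
  forall l, Cmin x * norm2 l ^+ 2 <= qform (design x n) l.
Proof.
move=> n_ge1 l; apply: le_trans (qform_gram_le_design l n_ge1).
apply: lambda_min_qform => [|z]; first by rewrite gram_design trmx_design.
by rewrite gram_design qform_design_ge0.
Qed.

End DesignMatrix.

Section InverseForm.
Variables (R : realType) (d : nat) (V : 'M[R]_d).
Hypotheses (V_sym : V^T = V) (V_unit : V \in unitmx).

Lemma trmx_invmx_sym : (invmx V)^T = invmx V.
Proof. by rewrite trmx_inv V_sym. Qed.

Lemma qform_mulmx_invmx y : qform V (invmx V *m y) = qform (invmx V) y.
Proof. by rewrite /qform trmx_mul trmx_invmx_sym -mulmxA mulKVmx. Qed.

Lemma dot_mulmx_invmx y : ((invmx V *m y)^T *m y) 0 0 = qform (invmx V) y.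
Proof. by rewrite trmx_mul trmx_invmx_sym. Qed.

End InverseForm.

Lemma pairmax_le (R : realType) d K (x : 'I_K -> 'cV[R]_d) (S : {set 'I_K})
    (f : 'cV[R]_d -> R) (B : R) : 0 <= B ->
  (forall i j, i \in S -> j \in S -> x i != x j -> f (x i - x j) <= B) ->
  pairmax x S f <= B.
Proof.
move=> B_ge0 f_le; apply: (big_ind (fun v => v <= B)) => // [u v|i iS].
  by rewrite ge_max => -> ->.
apply: (big_ind (fun v => v <= B)) => // [u v|j /andP [jS xij]].
  by rewrite ge_max => -> ->.
exact: f_le.
Qed.

Section PhaseConstants.
Variables (R : realType) (K : nat) (delta : R) (m : nat).
Hypotheses (delta_gt0 : 0 < delta) (delta_lt1 : delta < 1) (m_ge1 : (1 <= m)%N).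
Hypothesis K_ge1 : (1 <= K)%N.

Lemma ln_r_m_gt0 : 0 < ln ((K%:R ^+ 2) / delta_m delta m).
Proof.
rewrite ln_gt0 // /delta_m invf_div mulrA ltr_pdivlMr // mul1r.
apply: lt_le_trans delta_lt1 _; rewrite -!natrX -natrM ler1n.
by rewrite muln_gt0 !expn_gt0 K_ge1 m_ge1.
Qed.

Lemma r_m_gt0 : 0 < r_m K delta m.
Proof. by rewrite sqrtr_gt0 mulr_gt0 ?ln_r_m_gt0. Qed.

Lemma sqr_r_m : r_m K delta m ^+ 2 = 8 * ln ((K%:R ^+ 2) / delta_m delta m).
Proof. by rewrite sqr_sqrtr // mulr_ge0 // ltW ?ln_r_m_gt0. Qed.

End PhaseConstants.

Section Phase.
Variables (R : realType) (d K : nat) (x : 'I_K -> 'cV[R]_d) (S : {set 'I_K}).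
Variables (delta : R) (m : nat).
Local Notation C := (Cmin x).
Local Notation D := (D_m x S).
Local Notation r := (r_m K delta m).
Local Notation eps := (eps_m x S delta m).
Local Notation a := ((2^-1 : R) ^+ m.+1).

Lemma D_m_ge0 : 0 <= D.
Proof.
rewrite !mulr_ge0 ?sqrtr_ge0 // subr_ge0 -{1}(sqrtr1 R) ler_sqrt //.
by rewrite ler1n.
Qed.

Lemma eps_m_ge0 : 0 <= eps.
Proof.
rewrite mulr_ge0 ?exprn_ge0 ?invr_ge0 // le_min ler01 /=.
by rewrite divr_ge0 ?sqrtr_ge0 // mulr_ge0 ?sqrtr_ge0 ?D_m_ge0.
Qed.

Lemma eps_m_le_halfpow : eps <= a.
Proof. by rewrite ler_piMl ?exprn_ge0 ?invr_ge0 // ge_min lexx. Qed.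

Lemma eps_m_le : eps <= D * Num.sqrt C / r * a.
Proof. by rewrite ler_wpM2r ?exprn_ge0 ?invr_ge0 // ge_min lexx orbT. Qed.

Lemma eps_m_eq0 : C <= 0 -> eps = 0.
Proof. by move=> C_le0; rewrite /eps_m ler0_sqrtr // mulr0 mul0r minEge ler01 mul0r. Qed.

Lemma mem_Lambda_m i j lam : i \in S -> j \in S -> x i != x j ->
  (lam^T *m x j) 0 0 + eps <= (lam^T *m x i) 0 0 -> norm2 lam <= D ->
  Lambda_m x S delta m lam.
Proof. by move=> iS jS xij lam_ij lam_D; split => //; exists j => //; exists i. Qed.

Variable V : 'M[R]_d.
Hypotheses (V_psd : forall l, 0 <= qform V l) (stop : phase_stopped x S delta m V).

Lemma phase_stopped_lt lam : Lambda_m x S delta m lam -> r ^+ 2 < qform V lam.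
Proof.
move=> lam_in; rewrite -(sqr_sqrtr (V_psd lam)) -lte_fin.
by apply: lt_le_trans stop _; apply: ereal_inf_lbound; exists lam.
Qed.

Lemma Cmin_gt0 i j : i \in S -> j \in S -> x i != x j -> 0 < C.
Proof.
move=> iS jS xij; rewrite ltNge; apply/negP => C_le0.
have zero_in : Lambda_m x S delta m 0.
  apply: (mem_Lambda_m iS jS xij); first by rewrite eps_m_eq0 // trmx0 !mul0mx addr0.
  by rewrite /norm2 big1 ?sqrtr0 ?D_m_ge0 // => k _; rewrite mxE expr0n.
by have := phase_stopped_lt zero_in; rewrite /qform mulmx0 mxE ltNge sqr_ge0.
Qed.

Hypotheses (V_sym : V^T = V) (V_coer : forall l, C * norm2 l ^+ 2 <= qform V l).

Lemma pair_qform_invmx_le i j : 0 < r -> i \in S -> j \in S -> x i != x j ->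
  qform (invmx V) (x i - x j) <= a ^+ 2 / r ^+ 2.
Proof.
move=> r_gt0 iS jS xij; have C_gt0 := Cmin_gt0 iS jS xij.
have V_unit := qform_coercive_unitmx C_gt0 V_coer.
have r2_gt0 : 0 < r ^+ 2 by rewrite exprn_gt0.
set y := x i - x j; set q := qform (invmx V) y.
rewrite leNgt; apply/negP; rewrite ltr_pdivrMr // => a2_lt.
have q_gt0 : 0 < q by rewrite -(pmulr_lgt0 _ r2_gt0) (le_lt_trans (sqr_ge0 a)).
have eps2_le : eps ^+ 2 <= a ^+ 2.
  by rewrite ler_sqr ?nnegrE ?eps_m_ge0 ?eps_m_le_halfpow ?exprn_ge0 ?invr_ge0.
set lam := (eps / q) *: (invmx V *m y).
have lam_V : qform V lam = eps ^+ 2 / q.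
  by rewrite qformZ qform_mulmx_invmx // -/q; field; rewrite gt_eqF.
have lam_y : (lam^T *m y) 0 0 = eps.
  by rewrite linearZ /= -scalemxAl mxE dot_mulmx_invmx // divfK ?gt_eqF.
have lam_D : norm2 lam <= D.
  have epsr : eps * r <= D * Num.sqrt C * a by rewrite -ler_pdivlMr // mulrAC eps_m_le.
  have : eps ^+ 2 * r ^+ 2 <= D ^+ 2 * C * a ^+ 2.
    rewrite -exprMn -(sqr_sqrtr (ltW C_gt0)) -!exprMn ler_sqr ?nnegrE ?epsr //.
      by rewrite mulr_ge0 ?eps_m_ge0 ?ltW.
    by rewrite mulr_ge0 ?exprn_ge0 ?invr_ge0 // mulr_ge0 ?sqrtr_ge0 ?D_m_ge0.
  move=> epsr2; have eps2_q : eps ^+ 2 / q <= D ^+ 2 * C.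
    rewrite ler_pdivrMr // -(ler_pM2r r2_gt0) (le_trans epsr2) //.
    rewrite -[X in _ <= X]mulrA ler_wpM2l ?(ltW a2_lt) //.
    by rewrite mulr_ge0 ?sqr_ge0 ?(ltW C_gt0).
  have := V_coer lam; rewrite lam_V => /le_trans/(_ eps2_q).
  by rewrite [_ * C]mulrC ler_pM2l // ler_sqr ?nnegrE ?sqrtr_ge0 ?D_m_ge0.
have lam_in : Lambda_m x S delta m lam.
  apply: (mem_Lambda_m iS jS xij) lam_D; rewrite -lam_y.
  have -> : (lam^T *m y) 0 0 = (lam^T *m x i) 0 0 - (lam^T *m x j) 0 0.
    by rewrite /y mulmxBr !mxE.
  by rewrite addrC subrK.
have := phase_stopped_lt lam_in; rewrite lam_V ltr_pdivlMr // ltNge mulrC.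
by rewrite (le_trans eps2_le) // ltW.
Qed.

End Phase.

Theorem lemma1 (R : realType) (d K : nat) (x : 'I_K -> 'cV[R]_d)
  (x_inj : injective x)
  (x_norm : forall k, norm2 (x k) <= 1)
  (delta : R) (delta_gt0 : 0 < delta) (delta_lt1 : delta < 1)
  (m : nat) (m_ge1 : (1 <= m)%N)
  (S : {set 'I_K}) (S_big : (1 < #|S|)%N)
  (n : 'I_K -> nat) (n_ge1 : forall k, (1 <= n k)%N)
  (stop : phase_stopped x S delta m (design x n)) :
  pairmax x S (fun y => qform (invmx (design x n)) y)
    <= ((2^-1) ^+ m.+1) ^+ 2 / (8 * ln ((K%:R ^+ 2) / delta_m delta m)).
Proof.
have K_gt0 : (0 < K)%N by rewrite -[K]card_ord (leq_trans (ltnW S_big)) ?max_card.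
rewrite -(sqr_r_m delta_gt0 delta_lt1 m_ge1 K_gt0).
apply: pairmax_le => [|i j iS jS xij]; first by rewrite divr_ge0 ?sqr_ge0.
apply: (pair_qform_invmx_le (qform_design_ge0 x n) stop (trmx_design x n)
  (design_coercive x n_ge1)) => //; exact: r_m_gt0.
Qed.
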